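(* Let $V$ be a vertex operator algebra, $n\in\mathbb{N}$, $u\in V$ homogeneous, $v\in V$, $t\in\mathbb{Z}_+$ and $i_1,\dots,i_t\in\mathbb{N}$. Put $p_0=0$, $p_s=\sum_{j=1}^s i_j$ for $1\le s\le t$, and $r=\sum_{j=1}^t(\mathrm{wt}\,u+j-1)i_j$. For $k_1,\dots,k_{p_t}\in\mathbb{N}$ set \[ P_{i_1,\dots,i_t}(k_1,\dots,k_{p_t})=\prod_{s=1}^t\prod_{l=1}^{i_s}\binom{k_{l+p_{s-1}}+s-1}{s-1}u_{-k_{l+p_{s-1}}-s}. \] Then \[ u_{-t}^{i_t}\cdots u_{-1}^{i_1}\mathbf{1}*_nv=\sum_{m=0}^n\sum_{j=-m}^n(-1)^m\binom{m+n}{n}\binom{n+r}{j+m}\sum_{\substack{k_1,\dots,k_{p_t}\in\mathbb{N}\\k_1+\cdots+k_{p_t}=n-j}}{}^{\circ}_{\circ}P_{i_1,\dots,i_t}(k_1,\dots,k_{p_t}){}^{\circ}_{\circ}v+g_{i_1,\dots,i_t}(v), \] where $g_{i_1,\dots,i_t}(v)$ is a linear combination of elements ${}^{\circ}_{\circ}u_{q_1}\cdots u_{q_{p_t}}{}^{\circ}_{\circ}v$ with $q_1,\dots,q_{p_t}\in\mathbb{Z}$ and at least one $q_i\ge0$. Furthermore, if $n+r\ge0$ and $r<0$, the range of the sum over $j$ may be taken to be $-n\le j\le n+r$.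
   Context: $Y(v,x)=\sum v_kx^{-k-1}$; $\mathrm{wt}$ is the $L(0)$-eigenvalue. The level $n$ product is $a*_nb=\sum_{m=0}^n(-1)^m\binom{m+n}{n}\mathrm{Res}_x(1+x)^{\mathrm{wt}\,a+n}Y(a,x)b\,x^{-n-m-1}$ for homogeneous $a$ (the element $u_{-t}^{i_t}\cdots u_{-1}^{i_1}\mathbf{1}$ has weight $r$). Normal ordering ${}^{\circ}_{\circ}\cdots{}^{\circ}_{\circ}$ of a product of modes moves all modes $u_q$ with $q\ge0$ to the right of those with $q<0$ (for two modes, ${}^{\circ}_{\circ}u_ju_k{}^{\circ}_{\circ}=u_ju_k$ if $j<0$ and $=u_ku_j$ if $j\ge0$). Binomials $\binom{p}{q}=p(p-1)\cdots(p-q+1)/q!$ for $q\in\mathbb{N}$, $0$ for $q<0$. *)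

From HB Require Import structures.
From mathcomp Require Import all_boot all_algebra.
From mathcomp Require Import reals Rstruct.
From mathcomp.real_closed Require Import complex.
From Stdlib Require Import ClassicalEpsilon.
Set Implicit Arguments. Unset Strict Implicit. Unset Printing Implicit Defensive.
Import GRing.Theory Num.Theory.
Local Open Scope ring_scope.

Notation CC := (Rdefinitions.R[i]).

(* Generalized binomial coefficient  binom(p, i) = p(p-1)...(p-i+1)/i!
   for p : int, i : nat.  For p = -(a+1) it equals (-1)^i C(a+i, i). *)
Definition gbinom (p : int) (i : nat) : int :=
  match p with
  | Posz a => ('C(a, i))%:Z
  | Negz a => (-1) ^+ i * ('C(a + i, i))%:Z
  end.

Definition binomZ (p q : int) : int :=
  match q with Posz b => gbinom p b | Negz _ => 0 end.

(* Sum of a sequence with only finitely many nonzero terms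
   (f M = 0 for all M large); 0 by convention otherwise. *)
Definition tsum {V : zmodType} (f : nat -> V) : V :=
  match excluded_middle_informative
          (exists N : nat, forall M : nat, (N <= M)%N -> f M = 0) with
  | left H => \sum_(i < proj1_sig (constructive_indefinite_description _ H)) f i
  | right _ => 0
  end.

(* Sum of F j over integers lo <= j <= hi (0 if hi < lo). *)
Definition isum {V : zmodType} (lo hi : int) (F : int -> V) : V :=
  \sum_(x < absz (hi - lo + 1) | lo + x%:Z <= hi) F (lo + x%:Z).

Section VOA.
Variables (K : fieldType) (V : lmodType K).
(* Y u n v  =  u_n v,  where  Y(u,x) = sum_n u_n x^{-n-1}. *)
Variable Y : V -> int -> V -> V.
Variables (one omega : V) (c : K).

(* Virasoro operators: Y(omega, x) = sum_n L(n) x^{-n-2}. *)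
Definition Lop (n : int) : V -> V := Y omega (n + 1).

Definition homog (k : int) (v : V) : Prop := Lop 0 v = k%:~R *: v.

Definition in_span (s : seq V) (v : V) : Prop :=
  exists a : nat -> K, v = \sum_(j < size s) a j *: s`_j.

(* Vertex operator algebra (V, Y, 1, omega) of central charge c
   (Frenkel-Lepowsky-Meurman / Lepowsky-Li), Jacobi identity in its
   equivalent component (Borcherds) form. *)
Record is_VOA : Prop := {
  Y_linear_l : forall (a : K) u u' n v, Y (a *: u + u') n v = a *: Y u n v + Y u' n v;
  Y_linear_r : forall (a : K) u n v v', Y u n (a *: v + v') = a *: Y u n v + Y u n v';
  Y_trunc : forall u v, exists N : int, forall n : int, N <= n -> Y u n v = 0;
  Y_vacuum : forall n v, Y one n v = if n == -1 then v else 0;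
  Y_creation : forall u, Y u (-1) one = u /\ (forall n : int, 0 <= n -> Y u n one = 0);
  Y_Borcherds : forall (u v w : V) (p q r : int),
    tsum (fun i => Y (Y u (r + i%:Z) v) (p + q - i%:Z) w *~ gbinom p i)
    = tsum (fun i => Y u (p + r - i%:Z) (Y v (q + i%:Z) w) *~ ((-1) ^+ i * gbinom r i))
      - tsum (fun i => Y v (q + r - i%:Z) (Y u (p + i%:Z) w)
                         *~ ((-1) ^+ i * gbinom r i * (-1) ^+ (absz r)));
  Virasoro : forall (m n : int) v,
    Lop m (Lop n v) - Lop n (Lop m v)
    = Lop (m + n) v *~ (m - n)
      + (if m + n == 0 then ((m ^+ 3 - m)%:~R / 12%:R * c) *: v else 0);
  L_derivative : forall u n v, Y (Lop (-1) u) n v = Y u (n - 1) v *~ (- n);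
  grading : forall v, exists s : seq (int * V),
    (forall x, x \in s -> homog x.1 x.2) /\ v = \sum_(x <- s) x.2;
  grading_findim : forall k : int, exists s : seq V, forall v, homog k v -> in_span s v;
  grading_bounded : exists N : int, forall k v, k < N -> homog k v -> v = 0;
  omega_weight : homog 2 omega
}.

(* The level n product  a *_n b  of a (homogeneous of weight wa) with b:
   sum_{m=0}^n (-1)^m C(m+n,n) Res_x (1+x)^{wa+n} Y(a,x) b x^{-n-m-1},
   where the residue equals sum_{i>=0} binom(wa+n,i) a_{i-n-m-1} b. *)
Definition star (a : V) (wa : int) (n : nat) (b : V) : V :=
  \sum_(m < n.+1)
    (tsum (fun i => Y a (i%:Z - n%:Z - m%:Z - 1) b *~ gbinom (wa + n%:Z) i)
       *~ ((-1) ^+ m * ('C(m + n, n))%:Z)).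

Fixpoint nord (u : V) (qs : seq int) (v : V) : V :=
  match qs with
  | [::] => v
  | q :: qs' => if q < 0 then Y u q (nord u qs' v) else nord u qs' (Y u q v)
  end.

Section Monomial.
Variables (u : V) (i : nat -> nat).

Fixpoint elt (s : nat) : V :=
  match s with
  | 0 => one
  | s'.+1 => iter (i s'.+1) (Y u (- (s'.+1)%:Z)) (elt s')
  end.

Definition psum (s : nat) : nat := \sum_(1 <= j < s.+1) i j.

Definition wtr (wtu : int) (t : nat) : int :=
  \sum_(1 <= j < t.+1) (wtu + j%:Z - 1) * (i j)%:Z.

(* The factors of P_{i_1..i_t}, as pairs (index l + p_{s-1}, s), listed in
   operator order: the s = t block leftmost, ..., the s = 1 block rightmost,
   matching u_{-t}^{i_t} ... u_{-1}^{i_1}. *)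
Definition blocks (t : nat) : seq (nat * nat) :=
  flatten [seq [seq (l + psum s.-1, s)%N | l <- iota 1 (i s)] | s <- rev (iota 1 t)].

(* k_a for a 1-based index a *)
Definition kat (pt N : nat) (k : {ffun 'I_pt -> 'I_N}) (a : nat) : nat :=
  if @insub nat (fun x => x < pt)%N _ a.-1 is Some a' then val (k a') else 0%N.

Definition Pterm (t N : nat) (k : {ffun 'I_(psum t) -> 'I_N}) (v : V) : V :=
  nord u [seq - (kat k x.1)%:Z - x.2%:Z | x <- blocks t] v
    *~ (\prod_(x <- blocks t) 'C(kat k x.1 + x.2 - 1, x.2 - 1))%:Z.

(* sum_{m=0}^n sum_{j = lo m}^{hi} (-1)^m C(m+n,n) binom(n+r, j+m)
     sum_{k_1+...+k_{p_t} = n-j} :P(k): v   (valid for hi <= n) *)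
Definition mainsum (wtu : int) (t n : nat) (lo : nat -> int) (hi : int) (v : V) : V :=
  \sum_(m < n.+1) isum (lo m) hi (fun j =>
    (\sum_(k : {ffun 'I_(psum t) -> 'I_(absz (n%:Z - j)).+1}
                 | (\sum_(x : 'I_(psum t)) val (k x) == absz (n%:Z - j))%N)
           Pterm k v)
      *~ ((-1) ^+ m * ('C(m + n, n))%:Z * binomZ (n%:Z + wtr wtu t) (j + m%:Z))).

End Monomial.

Definition gset (u : V) (p : nat) (v : V) (y : V) : Prop :=
  exists qs : seq int, size qs = p /\ has (fun q => 0 <= q) qs /\ y = nord u qs v.

Definition lspan (S : V -> Prop) (x : V) : Prop :=
  exists s : seq (K * V), (forall y, y \in s -> S y.2) /\ x = \sum_(y <- s) y.1 *: y.2.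

End VOA.

(* Write [a = u_{-s_1} ... u_{-s_l} 1].  Borcherds' identity with [p = 0] gives
     [Y(u_{-s} w, q) = sum_i C(s-1+i, i) (u_{-s-i} Y(w, q+i) - (-1)^s Y(w, q-s-i) u_i)],
   so by induction on [l], [Y(a, q) x] agrees, up to normally ordered monomials of
   length [l] with some nonnegative mode, with its all-negative-mode part: the sum over
   [k_1 + ... + k_l = -q-1] of [prod C(k_j+s_j-1, s_j-1) u_{-k_1-s_1} ... u_{-k_l-s_l} x],
   which is [0] when [q >= 0].  Substituting this into the definition of [*_n] and
   putting [j = i - m] gives the main sum.  When [r < 0 <= n + r], the factor
   [C(n+r, j+m)] vanishes unless [-m <= j <= n + r - m], so the range of [j] may be changed. *)

From HB Require Import structures.
From mathcomp Require Import all_boot all_algebra.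
From mathcomp Require Import reals Rstruct.
From mathcomp.real_closed Require Import complex.
From mathcomp Require Import zify.
From Stdlib Require Import ClassicalEpsilon.
Set Implicit Arguments. Unset Strict Implicit. Unset Printing Implicit Defensive.
Import GRing.Theory Num.Theory.
Local Open Scope ring_scope.

Section FiniteSums.
Variable W : zmodType.
Implicit Types f g : nat -> W.

Definition eventually0 f := exists N, forall M, (N <= M)%N -> f M = 0.

Lemma tsumE f N : (forall M, (N <= M)%N -> f M = 0) -> tsum f = \sum_(i < N) f i.
Proof.
move=> fN; rewrite /tsum; case: excluded_middle_informative => [f_ev0|[]]; last by exists N.
case: constructive_indefinite_description => N' /= fN'.
have sum_stable A B : (forall M, (A <= M)%N -> f M = 0) -> (A <= B)%N ->
    \sum_(i < B) f i = \sum_(i < A) f i.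
  move=> fA le_AB; rewrite -!(big_mkord xpredT) (big_cat_nat _ le_AB) //=.
  by rewrite [X in _ + X]big1_seq ?addr0 // => j /andP[_ /[!mem_index_iota] /andP[A_j _]]; exact: fA.
by case: (leqP N N') => [|/ltnW] le_NN'; [|symmetry]; exact: sum_stable.
Qed.

Lemma tsum_not_eventually0 f : ~ eventually0 f -> tsum f = 0.
Proof. by rewrite /tsum; case: excluded_middle_informative. Qed.

Lemma eq_tsum f g : f =1 g -> tsum f = tsum g.
Proof.
move=> fg; have [[N fN]|f_ev0] := excluded_middle_informative (eventually0 f).
  have gN M : (N <= M)%N -> g M = 0 by rewrite -fg; apply: fN.
  by rewrite (tsumE fN) (tsumE gN); apply: eq_bigr.
rewrite !tsum_not_eventually0 // => -[N gN].
by apply: f_ev0; exists N => M; rewrite fg; apply: gN.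
Qed.

Lemma tsumB f g : eventually0 f -> eventually0 g ->
  tsum (fun i => f i - g i) = tsum f - tsum g.
Proof.
move=> [N1 fN1] [N2 gN2]; set N := maxn N1 N2.
have fN M : (N <= M)%N -> f M = 0 by rewrite geq_max => /andP[/fN1].
have gN M : (N <= M)%N -> g M = 0 by rewrite geq_max => /andP[_ /gN2].
rewrite (tsumE fN) (tsumE gN) (@tsumE _ N) -?sumrB // => M NM.
by rewrite fN ?gN ?subr0.
Qed.

End FiniteSums.

Section LinearSpan.
Variables (K : fieldType) (V : lmodType K).
Implicit Types (S : V -> Prop) (x y : V).

Lemma lspan0 S : lspan S 0.
Proof. by exists [::]; rewrite big_nil. Qed.

Lemma lspan1 S y : S y -> lspan S y.
Proof.
by exists [:: (1, y)]; split; [move=> z /[!inE] /eqP-> | rewrite big_seq1 scale1r].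
Qed.

Lemma lspanD S x y : lspan S x -> lspan S y -> lspan S (x + y).
Proof.
move=> [s1 [s1S ->]] [s2 [s2S ->]]; exists (s1 ++ s2); rewrite big_cat.
by split=> // z; rewrite mem_cat => /orP[/s1S|/s2S].
Qed.

Lemma lspanZ S k x : lspan S x -> lspan S (k *: x).
Proof.
move=> [s [sS ->]]; exists [seq (k * z.1, z.2) | z <- s]; split.
  by move=> z /mapP[z' /sS ? ->].
by rewrite big_map scaler_sumr; apply: eq_bigr => z _; rewrite scalerA.
Qed.

Lemma lspanMz S x n : lspan S x -> lspan S (x *~ n).
Proof. by rewrite -scaler_int; apply: lspanZ. Qed.

Lemma lspanB S x y : lspan S x -> lspan S y -> lspan S (x - y).
Proof. by move=> Sx Sy; apply: lspanD Sx _; rewrite -scaleN1r; apply: lspanZ. Qed.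

Lemma lspan_sum S (I : Type) (r : seq I) (P : pred I) (F : I -> V) :
  (forall j, P j -> lspan S (F j)) -> lspan S (\sum_(j <- r | P j) F j).
Proof. by move=> SF; elim/big_rec: _ => [|j x /SF]; [apply: lspan0 | apply: lspanD]. Qed.

Lemma lspan_tsum S (f : nat -> V) : (forall j, lspan S (f j)) -> lspan S (tsum f).
Proof.
move=> Sf; rewrite /tsum; case: excluded_middle_informative => [f_ev0|_]; last exact: lspan0.
by apply: lspan_sum => j _.
Qed.

Lemma lspan_mono S S' x : (forall y, S y -> S' y) -> lspan S x -> lspan S' x.
Proof. by move=> SS' [s [sS ->]]; exists s; split=> // y /sS /SS'. Qed.

Lemma lspan_linear S S' (f : V -> V) x : linear f ->
  (forall y, S y -> lspan S' (f y)) -> lspan S x -> lspan S' (f x).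
Proof.
move=> f_lin fS [s [sS ->]]; elim: s sS => [|z s IH] sS.
  have f0 : f 0 = 0 := raddf0 (HB.pack f (GRing.isLinear.Build K V V *:%R f f_lin)).
  by rewrite big_nil f0; apply: lspan0.
rewrite big_cons f_lin; apply: lspanD; first by apply/lspanZ/fS/sS; rewrite inE eqxx.
by apply: IH => y ys; apply: sS; rewrite inE ys orbT.
Qed.

End LinearSpan.

Section NormalOrdering.
Variables (K : fieldType) (V : lmodType K) (Y : V -> int -> V -> V) (one omega : V) (c : K).
Hypothesis HV : is_VOA Y one omega c.

Lemma Y_linear a q : linear (Y a q).
Proof. exact: (fun k => Y_linear_r HV k a q). Qed.

Let Ylin a q : {linear V -> V} :=
  HB.pack (Y a q) (GRing.isLinear.Build K V V *:%R (Y a q) (Y_linear a q)).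

Lemma Y0 a q : Y a q 0 = 0.
Proof. exact: (raddf0 (Ylin a q)). Qed.

Lemma YB a q x y : Y a q (x - y) = Y a q x - Y a q y.
Proof. exact: (raddfB (Ylin a q)). Qed.

Lemma YMz a q x z : Y a q (x *~ z) = Y a q x *~ z.
Proof. exact: (raddfMz (Ylin a q)). Qed.

Lemma Y_sum a q (I : Type) (r : seq I) (P : pred I) (F : I -> V) :
  Y a q (\sum_(j <- r | P j) F j) = \sum_(j <- r | P j) Y a q (F j).
Proof. exact: (raddf_sum (Ylin a q)). Qed.

Lemma Y_trunc_from a x (q : int) : exists N : nat, forall i, (N <= i)%N -> Y a (q + i%:Z) x = 0.
Proof. by have [N aN] := Y_trunc HV a x; exists (absz (N - q)) => i le_Ni; apply: aN; lia. Qed.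

Lemma gbinom_neg s i : (-1) ^+ i * gbinom (- (s.+1)%:Z) i = ('C(s + i, i))%:Z.
Proof. exact: signrMK. Qed.

(* Borcherds' identity at [p = 0] and [r = -s-1]; on its left only [i = 0] survives. *)
Lemma Y_Y_neg a w s q x :
  Y (Y a (- (s.+1)%:Z) w) q x
  = tsum (fun i => Y a (- (s.+1)%:Z - i%:Z) (Y w (q + i%:Z) x) *~ ('C(s + i, i))%:Z)
  - tsum (fun i => Y w (q - (s.+1)%:Z - i%:Z) (Y a i%:Z x) *~ (('C(s + i, i))%:Z * (-1) ^+ s.+1)).
Proof.
have := Y_Borcherds HV a w x 0 q (- (s.+1)%:Z).
rewrite (@tsumE _ _ 1) => [|[|i] _ //].
rewrite big_ord1 /= addr0 add0r subr0 mulr1z => ->.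
by congr (_ - _); apply: eq_tsum => i; rewrite ?add0r gbinom_neg.
Qed.

Variable u : V.

Definition monomial (ss : seq nat) : V := foldr (fun s w => Y u (- s%:Z) w) one ss.

Fixpoint nord_sum (ss : seq nat) (N : nat) (x : V) : V :=
  match ss with
  | [::] => if N == 0%N then x else 0
  | s :: ss' => \sum_(k < N.+1)
      Y u (- k%:Z - s%:Z) (nord_sum ss' (N - k) x) *~ ('C(k + s - 1, s - 1))%:Z
  end.

(* Recall that [Negz N] is [-N-1]: this is the part of [Y (monomial ss) q x]
   in which all modes of [u] are negative. *)
Definition nord_part (ss : seq nat) (q : int) (x : V) : V :=
  if q is Negz N then nord_sum ss N x else 0.

Definition nord_mon (p : nat) (x y : V) : Prop :=
  exists qs, size qs = p /\ y = nord Y u qs x.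

Lemma gset_nord_mon p x y : gset Y u p x y -> nord_mon p x y.
Proof. by move=> [qs [size_qs [_ ->]]]; exists qs. Qed.

Lemma nord_mon_cons q p x y : q < 0 -> nord_mon p x y -> nord_mon p.+1 x (Y u q y).
Proof. by move=> q_lt0 [qs [size_qs ->]]; exists (q :: qs); rewrite /= q_lt0 size_qs. Qed.

Lemma gset_cons q p x y : q < 0 -> gset Y u p x y -> gset Y u p.+1 x (Y u q y).
Proof.
move=> q_lt0 [qs [size_qs [has_qs ->]]]; exists (q :: qs).
by rewrite /= q_lt0 size_qs has_qs orbT.
Qed.

Lemma gset_cons_ge0 (j : nat) p x y : nord_mon p (Y u j%:Z x) y -> gset Y u p.+1 x y.
Proof. by move=> [qs [size_qs ->]]; exists (j%:Z :: qs); rewrite /= size_qs. Qed.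

Lemma nord_sum_span ss N x : all (fun s => 0 < s)%N ss ->
  lspan (nord_mon (size ss) x) (nord_sum ss N x).
Proof.
elim: ss N => [|s ss IH] N /=.
  by case: eqP => _ _; [apply/lspan1; exists [::] | apply: lspan0].
move=> /andP[s_gt0 ss_gt0]; apply: lspan_sum => k _; apply: lspanMz.
apply: (lspan_linear (Y_linear _ _)) (IH _ ss_gt0) => y ny.
by apply/lspan1/nord_mon_cons => //; lia.
Qed.

Lemma nord_part_span ss q x : all (fun s => 0 < s)%N ss ->
  lspan (nord_mon (size ss) x) (nord_part ss q x).
Proof. by case: q => [q _|N]; [apply: lspan0 | apply: nord_sum_span]. Qed.

Lemma nord_sum_cons s ss N x :
  nord_sum (s :: ss) N x
  = \sum_(k < N.+1) Y u (- k%:Z - s%:Z) (nord_sum ss (N - k) x) *~ ('C(k + s - 1, s - 1))%:Z.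
Proof. by []. Qed.

Lemma nord_part_cons s ss q x :
  nord_part (s.+1 :: ss) q x
  = tsum (fun i => Y u (- (s.+1)%:Z - i%:Z) (nord_part ss (q + i%:Z) x) *~ ('C(s + i, i))%:Z).
Proof.
case: q => [q|N].
  by rewrite (@tsumE _ _ 0) ?big_ord0 // => i _; rewrite -PoszD Y0 mul0rz.
rewrite (@tsumE _ _ N.+1) => [|i lt_Ni]; last first.
  by rewrite (_ : Negz N + i%:Z = (i - N.+1)%N%:Z) ?Y0 ?mul0rz //; rewrite NegzE; lia.
rewrite {1}/nord_part nord_sum_cons; apply: eq_bigr => k _; have le_kN : (k <= N)%N by rewrite -ltnS.
rewrite (_ : Negz N + k%:Z = Negz (N - k)); last by rewrite !NegzE; lia.
rewrite (_ : (k + s.+1 - 1 = s + k)%N); last by lia.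
rewrite (_ : - k%:Z - (s.+1)%:Z = - (s.+1)%:Z - k%:Z); last by lia.
by rewrite subSS subn0 -[X in 'C(_, X)](addnK k s) bin_sub // leq_addl.
Qed.

Lemma nord_part_ge0 ss q x : 0 <= q -> nord_part ss q x = 0.
Proof. by case: q. Qed.

Lemma Y_monomial_nord_part ss q x : all (fun s => 0 < s)%N ss ->
  lspan (gset Y u (size ss) x) (Y (monomial ss) q x - nord_part ss q x).
Proof.
elim: ss q x => [|[//|s] ss IH] q x.
  by rewrite /= (Y_vacuum HV); case: q => [q|[|N]] _; rewrite /= ?subrr ?subr0; apply: lspan0.
move=> /andP[_ ss_gt0]; set w := monomial ss.
have -> : monomial (s.+1 :: ss) = Y u (- (s.+1)%:Z) w by [].
rewrite Y_Y_neg nord_part_cons addrAC -tsumB; first apply: lspanB.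
- apply: lspan_tsum => i; rewrite -mulrzBl -YB; apply: lspanMz.
  apply: (lspan_linear (Y_linear _ _)) (IH _ _ ss_gt0) => y gy.
  by apply/lspan1; apply: gset_cons gy; lia.
- apply: lspan_tsum => i; apply: lspanMz; set q' := q - _ - _; set y := Y u i%:Z x.
  rewrite -(subrK (nord_part ss q' y) (Y w q' y)); apply: lspanD.
    by apply: lspan_mono (IH _ _ ss_gt0) => z /gset_nord_mon /gset_cons_ge0.
  by apply: lspan_mono (nord_part_span _ _ ss_gt0) => z /gset_cons_ge0.
- have [N wN] := Y_trunc_from w x q.
  by exists N => M /wN ->; rewrite Y0 mul0rz.
- exists (absz q) => M le_qM.
  by rewrite nord_part_ge0 ?Y0 ?mul0rz //; lia.
Qed.

End NormalOrdering.

Fixpoint compositions (p N : nat) : seq (seq nat) :=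
  if p is p'.+1 then [seq k :: ks | k <- iota 0 N.+1, ks <- compositions p' (N - k)]
  else if N == 0%N then [:: [::]] else [::].

Lemma mem_compositions p N ks :
  (ks \in compositions p N) = (size ks == p) && (sumn ks == N).
Proof.
elim: p N ks => [|p IH] N ks; first by case: ks => [|k ks]; case: N.
apply/allpairsPdep/andP => [[k [ks' [+ + ->]]]|[]].
  by rewrite mem_iota IH => /andP[_ lt_kN] /andP[/eqP<- /eqP sum_ks]; split=> //=; apply/eqP; lia.
case: ks => [//|k ks] /eqP[size_ks] /eqP sum_ks; exists k, ks; rewrite /= in sum_ks.
by rewrite mem_iota IH size_ks eqxx /=; split=> //; [|apply/eqP]; lia.
Qed.

Lemma uniq_compositions p N : uniq (compositions p N).
Proof.
elim: p N => [|p IH] N; first by case: N.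
apply: (@allpairs_uniq_dep nat (fun _ => seq nat)) => [||[k ks] [k' ks'] _ _ [-> ->]] //.
exact: iota_uniq.
Qed.

Lemma leq_nth_sumn (s : seq nat) j : (nth 0 s j <= sumn s)%N.
Proof. by elim: s j => [|x s IH] [|j] //=; [apply: leq_addr | apply: leq_trans (IH j) (leq_addl _ _)]. Qed.

Lemma kat_ord p M (k : {ffun 'I_p -> 'I_M}) (x : 'I_p) : kat k x.+1 = k x.
Proof. by rewrite /kat /= valK. Qed.

Section Reindexing.
Variables (p : nat) (idx : seq nat).
Hypothesis idx_perm : perm_eq idx (iota 1 p).

Lemma mem_idx a : (a \in idx) = (0 < a <= p)%N.
Proof. by rewrite (perm_mem idx_perm) mem_iota; lia. Qed.

Lemma sumn_kat M (k : {ffun 'I_p -> 'I_M}) :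
  sumn [seq kat k a | a <- idx] = (\sum_x val (k x))%N.
Proof.
rewrite (perm_sumn (perm_map _ idx_perm)) (iotaDl 1 0) -map_comp sumnE big_map.
have -> : iota 0 p = index_iota 0 p by rewrite /index_iota subn0.
by rewrite big_mkord; apply: eq_bigr => x _; rewrite /= kat_ord.
Qed.

Lemma kat_inj M : injective (fun k : {ffun 'I_p -> 'I_M} => [seq kat k a | a <- idx]).
Proof.
move=> k1 k2 eq_k; apply/ffunP => x; apply/val_inj.
have x_idx : x.+1 \in idx by rewrite mem_idx /=.
have := congr1 (nth 0%N ^~ (index x.+1 idx)) eq_k.
by rewrite !(nth_map 0%N) ?index_mem // nth_index // !kat_ord.
Qed.

Lemma kat_onto N ks : size ks = p -> sumn ks = N ->
  exists k : {ffun 'I_p -> 'I_N.+1}, [seq kat k a | a <- idx] = ks.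
Proof.
move=> size_ks sum_ks.
exists [ffun x : 'I_p => inord (nth 0%N ks (index x.+1 idx))].
have size_idx : size idx = p by rewrite (perm_size idx_perm) size_iota.
apply: (@eq_from_nth _ 0%N); first by rewrite size_map size_idx.
move=> j; rewrite size_map => lt_j; rewrite (nth_map 0%N) //.
have := mem_nth 0%N lt_j; rewrite mem_idx; set a := nth _ idx j => /andP[a_gt0 a_le].
have lt_a : (a.-1 < p)%N by lia.
rewrite (_ : a = (Ordinal lt_a).+1) ?kat_ord ?ffunE /= ?prednK //.
rewrite index_uniq ?(perm_uniq idx_perm) ?iota_uniq //.
by rewrite inordK // ltnS -sum_ks leq_nth_sumn.
Qed.

Lemma sum_ffun_compositions (W : zmodType) N (F : seq nat -> W) :
  \sum_(k : {ffun 'I_p -> 'I_N.+1} | (\sum_x val (k x) == N)%N) F [seq kat k a | a <- idx]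
  = \sum_(ks <- compositions p N) F ks.
Proof.
rewrite -big_filter -(big_map (fun k => [seq kat k a | a <- idx]) xpredT) /=; apply/perm_big/uniq_perm.
- by rewrite map_inj_uniq ?filter_uniq ?index_enum_uniq //; apply: kat_inj.
- exact: uniq_compositions.
move=> ks; rewrite mem_compositions; apply/mapP/andP => [[k]|[/eqP size_ks /eqP sum_ks]].
  rewrite mem_filter => /andP[/eqP sum_k _] ->.
  by rewrite size_map (perm_size idx_perm) size_iota sumn_kat sum_k.
have [k katk] := kat_onto size_ks sum_ks; exists k => //.
by rewrite mem_filter mem_index_enum andbT -sumn_kat katk sum_ks.
Qed.

End Reindexing.

Section Blocks.
Variable i : nat -> nat.

Lemma psumS t : psum i t.+1 = (psum i t + i t.+1)%N.
Proof. by rewrite /psum big_nat_recr. Qed.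

Lemma blocksS t : blocks i t.+1
  = [seq (l + psum i t, t.+1)%N | l <- iota 1 (i t.+1)] ++ blocks i t.
Proof. by rewrite /blocks -{1}[t.+1]addn1 iotaD rev_cat map_cat flatten_cat /= cats0 add1n. Qed.

Lemma size_blocks t : size (blocks i t) = psum i t.
Proof.
elim: t => [|t IH]; first by rewrite /psum big_geq.
by rewrite blocksS size_cat size_map size_iota IH psumS addnC.
Qed.

Lemma blocks_gt0 t : all (fun s => 0 < s)%N (map snd (blocks i t)).
Proof.
elim: t => [//|t IH]; rewrite blocksS map_cat all_cat IH andbT.
by rewrite -map_comp; apply/allP => s /mapP[l _ ->].
Qed.

Lemma perm_blocks t : perm_eq (map fst (blocks i t)) (iota 1 (psum i t)).
Proof.
elim: t => [|t IH]; first by rewrite /psum big_geq.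
rewrite blocksS map_cat -map_comp psumS iotaD perm_catC; apply: perm_cat IH _.
rewrite [(1 + _)%N]addnC iotaDl; under eq_map => l do rewrite /= addnC.
exact: perm_refl.
Qed.

End Blocks.

Lemma isum_window (W : zmodType) (G : int -> W) (lo hi a : int) (L : nat) :
  lo <= a -> a + L%:Z <= hi + 1 ->
  (forall j, lo <= j -> j <= hi -> (j < a) || (a + L%:Z <= j) -> G j = 0) ->
  isum lo hi G = \sum_(y < L) G (a + y%:Z).
Proof.
move=> le_lo_a le_aL G0; set d := absz (a - lo).
rewrite /isum big_mkcond /=.
rewrite -(big_mkord xpredT (fun x => if lo + x%:Z <= hi then G (lo + x%:Z) else 0)).
rewrite (@big_cat_nat _ _ _ d) //=; last by lia.
rewrite (@big_cat_nat _ _ _ (d + L) d) ?leq_addr //=; last by lia.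
rewrite big1_seq ?add0r => [|x /andP[_]]; last first.
  by rewrite mem_index_iota => /andP[_ lt_xd]; case: ifP => // x_le; apply: G0; lia.
rewrite [X in _ + X]big1_seq ?addr0 => [|x /andP[_]]; last first.
  by rewrite mem_index_iota => /andP[le_x _]; case: ifP => // x_le; apply: G0; lia.
rewrite -{1}(add0n d) big_addn (_ : (d + L - d = L)%N) ?big_mkord; last by lia.
apply: eq_bigr => y _; have lt_yL := ltn_ord y.
rewrite ifT; last by lia.
by congr G; lia.
Qed.

Lemma binomZ_out (R : nat) (z : int) : (z < 0) || (R%:Z < z) -> binomZ R%:Z z = 0.
Proof. by case: z => [b|b] //= out_z; rewrite bin_small //; lia. Qed.

Lemma lspan_star (K : fieldType) (V : lmodType K) (S : V -> Prop)
    (Y1 Y2 : V -> int -> V -> V) a w n b :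
  (exists N : int, forall q, N <= q -> Y1 a q b = 0) ->
  (exists N : int, forall q, N <= q -> Y2 a q b = 0) ->
  (forall q, lspan S (Y1 a q b - Y2 a q b)) ->
  lspan S (star Y1 a w n b - star Y2 a w n b).
Proof.
move=> [N1 Y1N] [N2 Y2N] SY; rewrite /star -sumrB; apply: lspan_sum => m _.
rewrite -mulrzBl; apply: lspanMz; rewrite -tsumB.
- by apply: lspan_tsum => j; rewrite -mulrzBl; apply/lspanMz/SY.
- by exists (absz (N1 + n%:Z + m%:Z + 1)) => M le_M; rewrite Y1N ?mul0rz //; lia.
- by exists (absz (N2 + n%:Z + m%:Z + 1)) => M le_M; rewrite Y2N ?mul0rz //; lia.
Qed.

Section Monomials.
Variables (K : fieldType) (V : lmodType K) (Y : V -> int -> V -> V) (one omega : V) (c : K).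
Hypothesis HV : is_VOA Y one omega c.
Variables (u : V) (i : nat -> nat).

Lemma elt_monomial t : elt Y one u i t = monomial Y one u (map snd (blocks i t)).
Proof.
elim: t => [//|t IH]; rewrite /= IH blocksS map_cat /monomial foldr_cat -map_comp.
by rewrite -{1}(size_iota 1 (i t.+1)); elim: (iota 1 _) => //= l s ->.
Qed.

Definition nord_term (ss ks : seq nat) (x : V) : V :=
  nord Y u [seq - (p.1)%:Z - (p.2)%:Z | p <- zip ks ss] x
    *~ (\prod_(p <- zip ks ss) 'C(p.1 + p.2 - 1, p.2 - 1))%:Z.

Lemma Pterm_nord_term t N (k : {ffun 'I_(psum i t) -> 'I_N}) v :
  Pterm Y u k v
  = nord_term (map snd (blocks i t)) [seq kat k a | a <- map fst (blocks i t)] v.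
Proof. by rewrite /Pterm /nord_term -map_comp zip_map -map_comp big_map. Qed.

Lemma nord_sum_compositions ss N x : all (fun s => 0 < s)%N ss ->
  \sum_(ks <- compositions (size ss) N) nord_term ss ks x = nord_sum Y u ss N x.
Proof.
elim: ss N => [|s ss IH] N.
  by case: N => [|N] _ /=; rewrite ?big_nil // big_seq1 /nord_term /= big_nil mulr1z.
move=> /andP[s_gt0 ss_gt0]; rewrite nord_sum_cons big_allpairs_dep.
rewrite (_ : iota 0 N.+1 = index_iota 0 N.+1) ?big_mkord; last by rewrite /index_iota subn0.
apply: eq_bigr => k _; rewrite -(IH _ ss_gt0) (Y_sum HV) mulrz_suml.
apply: eq_bigr => ks _; rewrite /nord_term /= big_cons (YMz HV) PoszM -mulrzA_C.
by rewrite (_ : - k%:Z - s%:Z < 0) //; lia.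
Qed.

Lemma sum_Pterm t N v :
  \sum_(k : {ffun 'I_(psum i t) -> 'I_N.+1} | (\sum_x val (k x) == N)%N) Pterm Y u k v
  = nord_sum Y u (map snd (blocks i t)) N v.
Proof.
under eq_bigr => k _ do rewrite Pterm_nord_term.
rewrite (sum_ffun_compositions (perm_blocks i t) _ (fun ks => nord_term _ ks v)).
rewrite -(size_blocks i t) -(size_map snd).
exact: nord_sum_compositions (blocks_gt0 i t).
Qed.

(* [star] is parametric in the vertex operator: on the right it is applied to the
   all-negative-mode part of [Y] (which ignores its first argument). *)
Lemma mainsum_star a wtu t n v :
  mainsum Y u i wtu t n (fun m => - m%:Z) n%:Z v
  = star (fun _ q x => nord_part Y u (map snd (blocks i t)) q x) a (wtr i wtu t) n v.
Proof.
apply: eq_bigr => m _.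
rewrite (@isum_window _ _ _ _ (- m%:Z) (n + m).+1); [|lia|lia|by move=> j *; exfalso; lia].
rewrite (@tsumE _ _ (n + m).+1) => [|y le_y]; last by rewrite nord_part_ge0 ?mul0rz //; lia.
rewrite mulrz_suml; apply: eq_bigr => y _; have le_y : (y <= n + m)%N by rewrite -ltnS.
rewrite sum_Pterm (_ : absz (n%:Z - (- m%:Z + y%:Z))%R = (n + m - y)%N); last by lia.
rewrite (_ : - m%:Z + y%:Z + m%:Z = y%:Z); last by lia.
rewrite (_ : y%:Z - n%:Z - m%:Z - 1 = Negz (n + m - y)); last by rewrite NegzE; lia.
by rewrite /= mulrzA_C addrC.
Qed.

Lemma mainsum_shrink wtu t n v : 0 <= n%:Z + wtr i wtu t -> wtr i wtu t < 0 ->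
  mainsum Y u i wtu t n (fun _ => - n%:Z) (n%:Z + wtr i wtu t) v
  = mainsum Y u i wtu t n (fun m => - m%:Z) n%:Z v.
Proof.
set r := wtr i wtu t => R_ge0 r_lt0; apply: eq_bigr => m _; have le_mn := ltn_ord m.
set R := absz (n%:Z + r); have RE : n%:Z + r = R%:Z by lia.
have G0 j : (j < - m%:Z) || (- m%:Z + R.+1%:Z <= j) ->
    binomZ (n%:Z + r) (j + m%:Z) = 0 by move=> out_j; rewrite RE binomZ_out //; lia.
by rewrite !(@isum_window _ _ _ _ (- m%:Z) R.+1);
  [| lia | lia | move=> j _ _ /G0->; rewrite mulr0 mulr0z
   | lia | lia | move=> j _ _ /G0->; rewrite mulr0 mulr0z].
Qed.

End Monomials.

Unset Implicit Arguments.

Theorem lemma3p9 (V : lmodType CC) (Y : V -> int -> V -> V) (one omega : V) (c : CC)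
  (HV : is_VOA Y one omega c)
  (n : nat) (u : V) (wtu : int) (Hu : homog Y omega wtu u) (v : V)
  (t : nat) (Ht : (0 < t)%N) (i : nat -> nat) :
  exists g : V,
    lspan (gset Y u (psum i t) v) g
    /\ star Y (elt Y one u i t) (wtr i wtu t) n v
       = mainsum Y u i wtu t n (fun m => - (m%:Z)) n%:Z v + g
    /\ (0 <= n%:Z + wtr i wtu t -> wtr i wtu t < 0 ->
        star Y (elt Y one u i t) (wtr i wtu t) n v
        = mainsum Y u i wtu t n (fun _ => - (n%:Z)) (n%:Z + wtr i wtu t) v + g).
Proof.
set ss := map snd (blocks i t); set r := wtr i wtu t; set a := elt Y one u i t.
pose Ynord (_ : V) q x := nord_part Y u ss q x.
have main_nord : mainsum Y u i wtu t n (fun m => - m%:Z) n%:Z v = star Ynord a r n v.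
  exact: (mainsum_star HV u i a wtu t n v).
exists (star Y a r n v - star Ynord a r n v).
split; [|split => [|R_ge0 r_lt0]].
- apply: lspan_star => [||q]; first exact: Y_trunc HV a v.
    by exists 0 => q; apply: nord_part_ge0.
  rewrite /a elt_monomial -(size_blocks i t) -(size_map snd).
  apply: (Y_monomial_nord_part HV); exact: blocks_gt0.
- by rewrite main_nord addrC subrK.
- by rewrite mainsum_shrink // main_nord addrC subrK.
Qed.
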